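(* Let $D_+$ and $D_-$ be link diagrams that differ only at a single crossing $c$, which is positive in $D_+$ and negative in $D_-$, and let $e_j,e_k$ be two diagonally opposite edges at $c$. Define $f:C_{Lee}(D_+)\to C_{Lee}(D_-)$ by $f(a^0,a^1)=((X_j-X_k)a^1,\,a^0)$ and $g:C_{Lee}(D_-)\to C_{Lee}(D_+)$ by $g(b^0,b^1)=((X_j-X_k)b^1,\,b^0)$. Then $f$ and $g$ are chain maps.
   Context: Lee complex. For an oriented link diagram $D$ with crossings $c_1,\dots,c_n$ and edges $e_1,\dots,e_m$ (as a 4-valent graph), let $R'=\mathbb{Q}[X_1,\dots,X_m,t]/(X_1^2=\dots=X_m^2=t)$. For $v\in\{0,1\}^n$ let $D_v$ be the resolution ($0$- or $1$-resolution at each crossing, standard Khovanov conventions) and $R_v=R'/(X_p=X_q$ if $e_p,e_q$ lie on the same circle of $D_v)$; $C_{Lee}(D)=\bigoplus_v R_v$. For $u,v$ differing only at $c_i$ ($u_i=0,v_i=1$), with edges at $c_i$ labeled $e_a$ (top left), $e_b$ (bottom left), $e_c$ (top right), $e_d$ (bottom right) so that the $0$-resolution joins $e_a$–$e_c$, $e_b$–$e_d$ and the $1$-resolution joins $e_a$–$e_b$, $e_c$–$e_d$: the edge map $\delta_{u,v}$ is the projection $R_u\to R_v$ if two circles merge, and multiplication by $X_b+X_c$ if a circle splits. The differential is $\delta=\sum_{u\lessdot v}(-1)^{\epsilon_{u,v}}\delta_{u,v}$, $\epsilon_{u,v}=\sum_{j<i}u_j$. Setting: $D_+$ and $D_-$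 have the same underlying 4-valent graph, hence the same edges and the same ring $R'$. The crossings are ordered identically in both, with $c$ last. Let $D_\pm^0,D_\pm^1$ be the $0$- and $1$-resolutions at $c$; then $D_+^0=D_-^1$ and $D_+^1=D_-^0$ as diagrams. As modules $C_{Lee}(D_\pm)=C_{Lee}(D_\pm^0)\oplus C_{Lee}(D_\pm^1)$, where $C_{Lee}(D_\pm^\epsilon)$ is the sum of the $R_v$ with $v_c=\epsilon$, and we write elements as $a=(a^0,a^1)$ accordingly. In the formula for $f$, $(X_j-X_k)a^1\in C_{Lee}(D_+^1)=C_{Lee}(D_-^0)$ and $a^0\in C_{Lee}(D_+^0)=C_{Lee}(D_-^1)$; similarly for $g$. *)

From HB Require Import structures.
From mathcomp Require Import all_boot all_order all_algebra.
From mathcomp Require Import mpoly.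
Set Implicit Arguments. Unset Strict Implicit. Unset Printing Implicit Defensive.
Import Order.TTheory GRing.Theory Num.Theory.
Local Open Scope ring_scope.

(* A (combinatorial) oriented link diagram with N crossings (ordered c_0 .. c_{N-1})
   and m edges e_0 .. e_{m-1} of the underlying 4-valent graph.
   At crossing i, placed in the standard Khovanov position, the edges are
   ea i (top left), eb i (bottom left), ec i (top right), ed i (bottom right);
   the 0-resolution joins ea-ec, eb-ed, the 1-resolution joins ea-eb, ec-ed.
   The two strands through crossing i are ea-ed and eb-ec.
   Orientation: inA i (resp. inB i) says the edge at the top-left (resp.
   bottom-left) slot points INTO the crossing; then the bottom-right (resp.
   top-right) slot points out of it, i.e. its "in" flag is ~~ inA i (~~ inB i). *)
Record diagram (N m : nat) := Diagram {
  ea : 'I_N -> 'I_m; eb : 'I_N -> 'I_m; ec : 'I_N -> 'I_m; ed : 'I_N -> 'I_m;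
  inA : 'I_N -> bool; inB : 'I_N -> bool }.

Section Diag.
Variables (N m : nat).
Implicit Types (D : diagram N m).

(* slots (crossing, position 0=TL,1=BL,2=TR,3=BR) *)
Definition slot_edge D (s : 'I_N * 'I_4) : 'I_m :=
  match val s.2 with 0 => ea D s.1 | 1 => eb D s.1 | 2 => ec D s.1 | _ => ed D s.1 end.
Definition slot_in D (s : 'I_N * 'I_4) : bool :=
  match val s.2 with 0 => inA D s.1 | 1 => inB D s.1 | 2 => ~~ inB D s.1 | _ => ~~ inA D s.1 end.

Definition wf_diagram D : Prop :=
  forall e : 'I_m,
    #|[set s | slot_edge D s == e]| = 2 /\
    #|[set s | (slot_edge D s == e) && slot_in D s]| = 1.

(* Standard Khovanov convention: a crossing is positive iff its 0-resolution
   is the oriented resolution (each arc joins an incoming to an outgoing edge). *)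
Definition positive_crossing D (i : 'I_N) : bool := inA D i == inB D i.
Definition negative_crossing D (i : 'I_N) : bool := ~~ positive_crossing D i.

Definition state := {ffun 'I_N -> bool}.

Definition res_rel D (v : state) : rel 'I_m := fun p q =>
  [exists i : 'I_N,
    if v i then
      [|| (p == ea D i) && (q == eb D i), (p == eb D i) && (q == ea D i),
          (p == ec D i) && (q == ed D i) | (p == ed D i) && (q == ec D i)]
    else
      [|| (p == ea D i) && (q == ec D i), (p == ec D i) && (q == ea D i),
          (p == eb D i) && (q == ed D i) | (p == ed D i) && (q == eb D i)]].

Definition same_circle D (v : state) (p q : 'I_m) : bool := connect (res_rel D v) p q.

(* R' = Q[X_1..X_m, t]/(X_i^2 = t): polynomial representatives in m+1 variables,
   variable m being t. *)
Definition lpoly := {mpoly rat[m.+1]}.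
Definition Xe (e : 'I_m) : lpoly := 'X_(widen_ord (leqnSn m) e).
Definition tvar : lpoly := 'X_(@ord_max m).

(* The ideal defining R_v = R'/(X_p = X_q for e_p, e_q on the same circle of D_v),
   as an ideal of Q[X_1..X_m,t]. *)
Definition lee_ideal D (v : state) (x : lpoly) : Prop :=
  exists (q : 'I_m -> lpoly) (r : 'I_m -> 'I_m -> lpoly),
    x = \sum_(e < m) q e * (Xe e ^+ 2 - tvar)
        + \sum_(e1 < m) \sum_(e2 < m)
            (if same_circle D v e1 e2 then r e1 e2 * (Xe e1 - Xe e2) else 0).

Definition lee_eq D (v : state) (x y : lpoly) : Prop := lee_ideal D v (x - y).

(* An element of C_Lee(D) = (+)_v R_v, given by a representative in each summand. *)
Definition lee_chain := state -> lpoly.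

Definition setst (v : state) (i : 'I_N) (b : bool) : state :=
  [ffun j => if j == i then b else v j].

(* edge map delta_{u,v} at crossing i (u = v with i reset to 0), applied to a
   representative; v is the target state.  Two circles merge iff afterwards
   eb i and ec i lie on the same circle of D_v; otherwise a circle splits. *)
Definition edge_map D (v : state) (i : 'I_N) (x : lpoly) : lpoly :=
  if same_circle D v (eb D i) (ec D i) then x
  else (Xe (eb D i) + Xe (ec D i)) * x.

Definition eps (v : state) (i : 'I_N) : nat := #|[set j : 'I_N | (j < i)%N && v j]|.

Definition lee_diff D (a : lee_chain) : lee_chain := fun v =>
  \sum_(i : 'I_N | v i) (-1) ^+ eps v i * edge_map D v i (a (setst v i false)).

Definition is_chain_map D1 D2 (F : lee_chain -> lee_chain) : Prop :=
  (forall a a' : lee_chain, (forall v, lee_eq D1 v (a v) (a' v)) ->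
     forall v, lee_eq D2 v (F a v) (F a' v)) /\
  (forall (a : lee_chain) (v : state),
     lee_eq D2 v (F (lee_diff D1 a) v) (lee_diff D2 (F a) v)).

(* The maps f, g: (a^0, a^1) |-> ((X_j - X_k) a^1, a^0), where a^0 is the part
   with v_c = 0, a^1 the part with v_c = 1, and the identifications
   C(D_+^1) = C(D_-^0), C(D_+^0) = C(D_-^1) only change the c-coordinate. *)
Definition cross_map (c : 'I_N) (j k : 'I_m) (a : lee_chain) : lee_chain := fun v =>
  if v c then a (setst v c false) else (Xe j - Xe k) * a (setst v c true).

Definition same_crossing D1 D2 (i : 'I_N) : Prop :=
  [/\ ea D1 i = ea D2 i, eb D1 i = eb D2 i, ec D1 i = ec D2 i & ed D1 i = ed D2 i] /\
  (inA D1 i = inA D2 i /\ inB D1 i = inB D2 i).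

(* D2 is obtained from D1 by changing crossing c: same four edges (and
   orientations) in the plane, redrawn in standard position, i.e. rotated by a
   quarter turn (either direction). *)
Definition crossing_change D1 D2 (c : 'I_N) : Prop :=
  ([/\ ea D2 c = eb D1 c, eb D2 c = ed D1 c, ec D2 c = ea D1 c & ed D2 c = ec D1 c] /\
   (inA D2 c = inB D1 c /\ inB D2 c = ~~ inA D1 c))
  \/
  ([/\ ea D2 c = ec D1 c, eb D2 c = ea D1 c, ec D2 c = ed D1 c & ed D2 c = eb D1 c] /\
   (inA D2 c = ~~ inB D1 c /\ inB D2 c = inA D1 c)).

Definition diag_opposite D (c : 'I_N) (j k : 'I_m) : bool :=
  [|| (j == ea D c) && (k == ed D c), (j == ed D c) && (k == ea D c),
      (j == eb D c) && (k == ec D c) | (j == ec D c) && (k == eb D c)].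

End Diag.

(* Away from c the two differentials agree term by term: the resolutions of D_+
   and D_- coincide once the c-coordinate of the state is flipped, and since c
   is the last crossing the signs (-1)^eps do not see that coordinate.  What is
   left over is the edge map at c applied to (X_j - X_k) a, and it vanishes in
   R_v: at a 1-resolution X_a = X_b and X_c = X_d, so if two circles merge then
   X_j = X_k, and if a circle splits the map multiplies by X_b + X_c, while
   (X_b + X_c)(X_b - X_c) = X_b^2 - X_c^2 = t - t = 0. *)
From HB Require Import structures.
From mathcomp Require Import all_boot all_order all_algebra.
From mathcomp Require Import mpoly ring.
Set Implicit Arguments. Unset Strict Implicit. Unset Printing Implicit Defensive.
Import GRing.Theory.
Local Open Scope ring_scope.

Section LeeIdeal.
Variables (N m : nat) (D : diagram N m) (v : state N).
Local Notation I := (lee_ideal D v).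

Lemma lee_idealD x y : I x -> I y -> I (x + y).
Proof.
move=> [q1 [r1 ->]] [q2 [r2 ->]].
exists (fun e => q1 e + q2 e), (fun a b => r1 a b + r2 a b).
rewrite addrACA -!big_split /=; apply: eq_bigr => e1 _.
rewrite -big_split mulrDl /=; congr (_ + _); apply: eq_bigr => e2 _.
by case: ifP; rewrite ?addr0 ?mulrDl.
Qed.

Lemma lee_idealMl y x : I x -> I (y * x).
Proof.
move=> [q [r ->]]; exists (fun e => y * q e), (fun a b => y * r a b).
rewrite mulrDr !mulr_sumr; congr (_ + _).
  by apply: eq_bigr => e _; rewrite mulrA.
apply: eq_bigr => e1 _; rewrite mulr_sumr; apply: eq_bigr => e2 _.
by case: ifP; rewrite ?mulr0 // mulrA.
Qed.

Lemma lee_idealN x : I x -> I (- x).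
Proof. by rewrite -mulN1r; apply: lee_idealMl. Qed.

Lemma lee_idealB x y : I x -> I y -> I (x - y).
Proof. by move=> Ix Iy; apply/lee_idealD/lee_idealN. Qed.

Lemma lee_ideal_sqr e : I (Xe e ^+ 2 - tvar m).
Proof.
exists (fun e' => (e' == e)%:R), (fun _ _ => 0).
rewrite (bigD1 e) //= eqxx mul1r big1 ?addr0 => [|e' /negbTE->]; last by rewrite mul0r.
by rewrite big1 ?addr0 // => e1 _; rewrite big1 // => e2 _; case: ifP; rewrite ?mul0r.
Qed.

Lemma lee_ideal_circle p q : same_circle D v p q -> I (Xe p - Xe q).
Proof.
move=> pq; exists (fun _ => 0), (fun a b => if (a == p) && (b == q) then 1 else 0).
rewrite big1 ?add0r => [|e _]; last by rewrite mul0r.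
rewrite (bigD1 p) //= (bigD1 q) //= pq !eqxx mul1r.
rewrite big1 ?addr0 => [|e /negbTE->]; last first.
  by rewrite andbF /=; case: ifP; rewrite ?mul0r.
rewrite big1 ?addr0 // => e1 /negbTE ne1; rewrite big1 // => e2 _.
by rewrite ne1 /=; case: ifP; rewrite ?mul0r.
Qed.

End LeeIdeal.

Lemma lee_ideal_same_circle N m (D1 D2 : diagram N m) v1 v2 x :
  same_circle D1 v1 =2 same_circle D2 v2 ->
  lee_ideal D1 v1 x -> lee_ideal D2 v2 x.
Proof.
move=> eq_sc [q [r ->]]; exists q, r; congr (_ + _).
by apply: eq_bigr => e1 _; apply: eq_bigr => e2 _; rewrite eq_sc.
Qed.

Section EdgeMap.
Variables (N m : nat) (D : diagram N m) (v : state N).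

Lemma edge_mapMl i x y : edge_map D v i (x * y) = x * edge_map D v i y.
Proof. by rewrite /edge_map; case: ifP => // _; rewrite mulrCA. Qed.

Lemma lee_ideal_edge_map_opposite (i : 'I_N) j k :
  v i -> diag_opposite D i j k -> lee_ideal D v (edge_map D v i (Xe j - Xe k)).
Proof.
move=> vi jk.
set a := ea D i; set b := eb D i; set c := ec D i; set d := ed D i.
have ab : same_circle D v a b.
  by apply: connect1; apply/existsP; exists i; rewrite vi !eqxx.
have cd : same_circle D v c d.
  by apply: connect1; apply/existsP; exists i; rewrite vi !eqxx /= ?orbT.
suff [ad bc] : lee_ideal D v (edge_map D v i (Xe a - Xe d)) /\
               lee_ideal D v (edge_map D v i (Xe b - Xe c)).
  case/or4P: jk => /andP[/eqP-> /eqP->] //;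
  by rewrite -opprB -mulN1r edge_mapMl; apply: lee_idealMl.
rewrite /edge_map -/b -/c; clearbody a b c d; case: ifP => [merge|_].
  have ad : same_circle D v a d by apply: connect_trans ab (connect_trans merge cd).
  by split; apply: lee_ideal_circle.
have split_bc : lee_ideal D v ((Xe b + Xe c) * (Xe b - Xe c)).
  rewrite (_ : _ * _ = (Xe b ^+ 2 - tvar m) - (Xe c ^+ 2 - tvar m)); last by ring.
  by apply: lee_idealB; apply: lee_ideal_sqr.
split=> //.
rewrite (_ : Xe a - Xe d = (Xe b - Xe c) + ((Xe a - Xe b) + (Xe c - Xe d))); last by ring.
rewrite mulrDr; apply: (lee_idealD split_bc); apply: lee_idealMl.
exact: lee_idealD (lee_ideal_circle ab) (lee_ideal_circle cd).
Qed.

End EdgeMap.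

Section States.
Variable N : nat.
Implicit Types (v : state N) (c i x : 'I_N).

Definition toggle v c : state N := setst v c (~~ v c).

Lemma setst_at v i b : setst v i b i = b.
Proof. by rewrite ffunE eqxx. Qed.

Lemma setst_ne v i x b : x != i -> setst v i b x = v x.
Proof. by move=> ne; rewrite ffunE (negbTE ne). Qed.

Lemma setst_id v i b : v i = b -> setst v i b = v.
Proof. by move=> vi; apply/ffunP => x; rewrite ffunE; case: eqP => // ->. Qed.

Lemma setst_setst v i b b' : setst (setst v i b) i b' = setst v i b'.
Proof. by apply/ffunP => x; rewrite !ffunE; case: eqP. Qed.

Lemma toggle_at v c : toggle v c c = ~~ v c.
Proof. exact: setst_at. Qed.

Lemma toggle_ne v c x : x != c -> toggle v c x = v x.
Proof. exact: setst_ne. Qed.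

Lemma setst_toggle v c i b :
  i != c -> setst (toggle v c) i b = toggle (setst v i b) c.
Proof.
move=> ne; rewrite /toggle setst_ne 1?eq_sym //.
apply/ffunP => x; rewrite !ffunE.
by case: (eqVneq x i) => [->|]; rewrite ?(negbTE ne) //; case: ifP.
Qed.

Lemma eps_toggle v c i : (i <= c)%N -> eps (toggle v c) i = eps v i.
Proof.
move=> ic; apply: eq_card => x; rewrite !inE ffunE.
by case: eqP => // ->; rewrite ltnNge ic.
Qed.

Lemma cross_mapE m c (j k : 'I_m) (a : lee_chain N m) v :
  cross_map c j k a v = (if v c then 1 else Xe j - Xe k) * a (toggle v c).
Proof. by rewrite /cross_map /toggle; case: (v c); rewrite ?mul1r. Qed.

Definition lee_diff_off m (D : diagram N m) c (a : lee_chain N m) v : lpoly m :=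
  \sum_(i | v i && (i != c)) (-1) ^+ eps v i * edge_map D v i (a (setst v i false)).

Lemma lee_diff_split m (D : diagram N m) c a v :
  lee_diff D a v = lee_diff_off D c a v +
    (if v c then (-1) ^+ eps v c * edge_map D v c (a (setst v c false)) else 0).
Proof.
rewrite /lee_diff /lee_diff_off; case: ifP => vc; first by rewrite (bigD1 c) // addrC.
rewrite addr0; apply: eq_bigl => i.
by case: (eqVneq i c) => [->|]; rewrite ?vc ?andbT.
Qed.

End States.

Section CrossingChange.
Variables (N m : nat) (D1 D2 : diagram N m) (c : 'I_N).
Hypothesis same_off_c : forall i, i != c -> same_crossing D1 D2 i.
Hypothesis change_c : crossing_change D1 D2 c.

Lemma res_rel_change v : res_rel D2 v =2 res_rel D1 (toggle v c).
Proof.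
move=> p q; apply: eq_existsb => i; rewrite ffunE.
case: (eqVneq i c) => [->|ne]; last by have [[-> -> -> ->] _] := same_off_c ne.
case: change_c => [[[-> -> -> ->] _]|[[-> -> -> ->] _]]; case: (v c) => /=;
move: (p == ea D1 c) (p == eb D1 c) (p == ec D1 c) (p == ed D1 c)
      (q == ea D1 c) (q == eb D1 c) (q == ec D1 c) (q == ed D1 c);
by do 8! case.
Qed.

Lemma same_circle_change v : same_circle D2 v =2 same_circle D1 (toggle v c).
Proof. by move=> p q; apply: eq_connect; apply: res_rel_change. Qed.

Lemma lee_ideal_change v x : lee_ideal D1 (toggle v c) x -> lee_ideal D2 v x.
Proof.
by apply: lee_ideal_same_circle => p q; rewrite same_circle_change.
Qed.

Lemma edge_map_change v i : i != c -> edge_map D2 v i =1 edge_map D1 (toggle v c) i.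
Proof.
move=> ne x; rewrite /edge_map same_circle_change.
by have [[_ -> -> _] _] := same_off_c ne.
Qed.

Lemma diag_opposite_change j k : diag_opposite D2 c j k = diag_opposite D1 c j k.
Proof.
rewrite /diag_opposite; case: change_c => [[[-> -> -> ->] _]|[[-> -> -> ->] _]];
move: (j == ea D1 c) (j == eb D1 c) (j == ec D1 c) (j == ed D1 c)
      (k == ea D1 c) (k == eb D1 c) (k == ec D1 c) (k == ed D1 c);
by do 8! case.
Qed.

Lemma cross_map_lee_eq j k (a a' : lee_chain N m) :
  (forall v, lee_eq D1 v (a v) (a' v)) ->
  forall v, lee_eq D2 v (cross_map c j k a v) (cross_map c j k a' v).
Proof.
move=> eq_aa' v; rewrite /lee_eq !cross_mapE -mulrBr.
by apply/lee_idealMl/lee_ideal_change/eq_aa'.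
Qed.

End CrossingChange.

Lemma same_crossing_sym N m (D1 D2 : diagram N m) i :
  same_crossing D1 D2 i -> same_crossing D2 D1 i.
Proof. by rewrite /same_crossing; case=> [[-> -> -> ->] [-> ->]]. Qed.

Lemma crossing_change_sym N m (D1 D2 : diagram N m) c :
  crossing_change D1 D2 c -> crossing_change D2 D1 c.
Proof.
rewrite /crossing_change.
by case=> [[[-> -> -> ->] [-> ->]]|[[-> -> -> ->] [-> ->]]]; [right|left];
  rewrite ?negbK.
Qed.

Section ChainMap.
Variables (n m : nat) (D1 D2 : diagram n.+1 m) (j k : 'I_m).
Local Notation c := (@ord_max n).
Hypothesis same_off_c : forall i, i != c -> same_crossing D1 D2 i.
Hypothesis change_c : crossing_change D1 D2 c.
Hypothesis opposite_jk : diag_opposite D1 c j k.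

Lemma lee_diff_off_cross_map a v :
  lee_diff_off D2 c (cross_map c j k a) v =
  (if v c then 1 else Xe j - Xe k) * lee_diff_off D1 c a (toggle v c).
Proof.
rewrite /lee_diff_off mulr_sumr.
rewrite (eq_bigl (fun i => toggle v c i && (i != c))) => [|i]; last first.
  by case: (eqVneq i c) => [->|ne]; rewrite ?andbF ?toggle_ne.
apply: eq_bigr => i /andP[_ ne].
rewrite cross_mapE setst_ne 1?eq_sym // -setst_toggle // edge_mapMl.
by rewrite (edge_map_change same_off_c change_c) // eps_toggle ?leq_ord // mulrCA.
Qed.

Lemma cross_map_lee_diff a v :
  lee_eq D2 v (cross_map c j k (lee_diff D1 a) v) (lee_diff D2 (cross_map c j k a) v).
Proof.
rewrite /lee_eq cross_mapE !(lee_diff_split _ c) lee_diff_off_cross_map toggle_at.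
case vc: (v c) => /=.
- rewrite !mul1r addr0 opprD addrA subrr add0r; apply: lee_idealN.
  rewrite cross_mapE setst_at /toggle setst_at setst_setst setst_id //.
  rewrite [_ * a v]mulrC edge_mapMl; apply/lee_idealMl/lee_idealMl.
  by apply: lee_ideal_edge_map_opposite; rewrite ?(diag_opposite_change change_c).
- rewrite addr0 mulrDr addrAC subrr add0r mulrCA.
  apply: (lee_ideal_change same_off_c change_c).
  rewrite /toggle setst_setst (setst_id vc) -edge_mapMl [_ * a v]mulrC edge_mapMl.
  apply/lee_idealMl/lee_idealMl/lee_ideal_edge_map_opposite => //.
  by rewrite setst_at vc.
Qed.

Lemma cross_map_is_chain_map : is_chain_map D1 D2 (cross_map c j k).
Proof. by split; [exact: cross_map_lee_eq | exact: cross_map_lee_diff]. Qed.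

End ChainMap.

Theorem mainTheorem4 (n m : nat) (Dp Dm : diagram n.+1 m) (j k : 'I_m) :
  wf_diagram Dp -> wf_diagram Dm ->
  (forall i : 'I_n.+1, i != ord_max -> same_crossing Dp Dm i) ->
  crossing_change Dp Dm ord_max ->
  positive_crossing Dp ord_max -> negative_crossing Dm ord_max ->
  diag_opposite Dp ord_max j k ->
  is_chain_map Dp Dm (cross_map ord_max j k) /\
  is_chain_map Dm Dp (cross_map ord_max j k).
Proof.
move=> _ _ same_off_c change_c _ _ opposite_jk.
split; first exact: cross_map_is_chain_map.
apply: cross_map_is_chain_map.
- by move=> i /same_off_c /same_crossing_sym.
- exact: crossing_change_sym.
- by rewrite (diag_opposite_change change_c).
Qed.
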